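(* Let $A=(a_{ij})\in M_n(\mathbb{C})$ and suppose the Schur map $S_A\colon M_n(\mathbb{C})\to M_n(\mathbb{C})$, $S_A(B)=A\circ B$, is nonzero and multiplicative (i.e. $S_A(BC)=S_A(B)S_A(C)$ for all $B,C$). Then: (i) all entries of $A$ are nonzero, $A^{*}=\overline{A^{[-1]}}$, and $A$ is diagonalizable; (ii) $\|A\|\ge n$, and if $A^{*}=A$ then $\|A\|=n$; (iii) if $A=A^{*}$, then $S_A$ is numerical range preserving, i.e. $W(S_A(B))=W(B)$ for all $B\in M_n(\mathbb{C})$.
   Context: $A\circ B=(a_{ij}b_{ij})$ is the entrywise product. For a matrix $A$ with no zero entries, $A^{[-1]}=(1/a_{ij})$ is its entrywise reciprocal, and $\overline{X}$ denotes the entrywise complex conjugate; $A^*$ is the conjugate transpose. $\|A\|$ is the operator (spectral) norm of $A$ acting on $\mathbb{C}^n$. The numerical range of $B$ is $W(B)=\{\langle Bx,x\rangle : x\in\mathbb{C}^n,\ \|x\|=1\}$. *)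

From HB Require Import structures.
From mathcomp Require Import all_boot all_order all_algebra.
From mathcomp Require Import complex.
From mathcomp Require Import classical_sets reals.
From mathcomp Require Import sesquilinear spectral.
Set Implicit Arguments. Unset Strict Implicit. Unset Printing Implicit Defensive.
Import Order.TTheory GRing.Theory Num.Theory.
Local Open Scope ring_scope.
Local Open Scope classical_set_scope.

Definition hadamard (C : pzRingType) n (A B : 'M[C]_n) : 'M[C]_n :=
  \matrix_(i, j) (A i j * B i j).

Definition ereciprocal (C : unitRingType) n (A : 'M[C]_n) : 'M[C]_n :=
  map_mx GRing.inv A.

Definition econj (R : rcfType) n (X : 'M[R[i]]_n) : 'M[R[i]]_n :=
  map_mx Num.conj X.

Definition adjmx (R : rcfType) n (A : 'M[R[i]]_n) : 'M[R[i]]_n :=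
  (A ^t* )%sesqui.

Definition vnorm (R : rcfType) n (x : 'cV[R[i]]_n) : R :=
  Num.sqrt (\sum_i (ComplexField.Normc.normc (x i 0)) ^+ 2).

Definition opnorm (R : realType) n (A : 'M[R[i]]_n) : R :=
  sup [set vnorm (A *m x) | x in [set x : 'cV[R[i]]_n | vnorm x = 1]].

Definition numrange (R : rcfType) n (B : 'M[R[i]]_n) : set R[i] :=
  [set ((x ^t* )%sesqui *m B *m x) 0 0 | x in [set x : 'cV[R[i]]_n | vnorm x = 1]].

From HB Require Import structures.
From mathcomp Require Import all_boot all_order all_algebra.
From mathcomp Require Import complex.
From mathcomp Require Import classical_sets reals.
From mathcomp Require Import sesquilinear spectral.
From mathcomp Require Import ring.
Import Order.TTheory GRing.Theory Num.Theory.
Local Open Scope ring_scope.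
Set Implicit Arguments. Unset Strict Implicit. Unset Printing Implicit Defensive.

(** Multiplicativity of [B |-> A o B] on matrix units forces the cocycle
    identity [a_ik = a_ij a_jk].  As some entry is nonzero, every diagonal
    entry is [1] and [a_ij a_ji = 1], so [A] is the rank-one matrix
    [(a_i1 a_1j)] with [A^2 = n A]: it is diagonalizable, and its first column
    is an eigenvector for [n], whence [||A|| >= n].  When [A] is Hermitian all
    entries are unimodular, which bounds [||A||] by [n], and
    [A o B = D B D^*] for the unitary [D = diag(a_11, ..., a_n1)], which
    preserves the numerical range. *)

Lemma sqr_sum_le (R : realDomainType) n (u : 'I_n -> R) :
  (\sum_i u i) ^+ 2 <= n%:R * \sum_i u i ^+ 2.
Proof.
have sum_sqr_diff : \sum_i \sum_j (u i - u j) ^+ 2 =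
    2%:R * (n%:R * \sum_i u i ^+ 2) - 2%:R * (\sum_i u i) ^+ 2.
  transitivity (\sum_i (n%:R * u i ^+ 2 + \sum_j u j ^+ 2 - 2%:R * u i * \sum_j u j)).
    apply: eq_bigr => i _.
    transitivity (\sum_j (u i ^+ 2 + u j ^+ 2 - 2%:R * u i * u j)).
      by apply: eq_bigr => j _; rewrite sqrrB; ring.
    by rewrite sumrB big_split /= sumr_const card_ord -mulr_sumr !mulr_natl.
  rewrite sumrB big_split /= -mulr_sumr sumr_const card_ord -mulr_suml.
  rewrite -mulr_sumr -mulr_natl; ring.
have : 0 <= \sum_i \sum_j (u i - u j) ^+ 2.
  by apply: sumr_ge0 => i _; apply: sumr_ge0 => j _; exact: sqr_ge0.
by rewrite sum_sqr_diff subr_ge0 ler_pM2l ?ltr0n.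
Qed.

Lemma hadamard_delta (C : pzRingType) n (A : 'M[C]_n) i j :
  hadamard A (delta_mx i j) = A i j *: delta_mx i j.
Proof.
apply/matrixP=> a b; rewrite !mxE.
by case: (a =P i) => [->|_]; case: (b =P j) => [->|_]; rewrite /= ?mulr1 ?mulr0.
Qed.

Lemma hadamard_mul_cocycle (C : comPzRingType) n (A : 'M[C]_n) :
  (forall B D : 'M[C]_n, hadamard A (B *m D) = hadamard A B *m hadamard A D) ->
  forall i j k, A i k = A i j * A j k.
Proof.
move=> hadamardM i j k.
have := congr1 (fun M : 'M[C]_n => M i k) (hadamardM (delta_mx i j) (delta_mx j k)).
rewrite mul_delta_mx !hadamard_delta -scalemxAl -scalemxAr mul_delta_mx scalerA.
by rewrite !mxE !eqxx /= !mulr1.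
Qed.

Lemma diagonalizable_sqr_scale (F : fieldType) n (A : 'M[F]_n.+1) (c : F) :
  c != 0 -> A *m A = c *: A -> diagonalizable A.
Proof.
move=> c_neq0 AA; apply/diagonalizableP; exists [:: 0; c].
  by rewrite /= inE andbT eq_sym.
apply: mxminpoly_min.
rewrite !big_cons big_nil mulr1 rmorphM /= !rmorphB /= horner_mx_X !horner_mx_C.
rewrite raddf0 subr0 mulrBr -[A * A]/(A *m A) AA.
by rewrite -[A * _]/(A *m _) mul_mx_scalar subrr.
Qed.

Section Cocycle.
Variables (F : fieldType) (n : nat) (A : 'M[F]_n).
Hypothesis cocycle : forall i j k, A i k = A i j * A j k.

Lemma cocycle_diag i j k : A i j != 0 -> A k k = 1.
Proof.
move=> Aij_neq0; have Aik_neq0 : A i k != 0.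
  by apply: contraNneq Aij_neq0 => Aik0; rewrite (cocycle i k j) Aik0 mul0r.
by apply: (mulfI Aik_neq0); rewrite -cocycle mulr1.
Qed.

Hypothesis diag1 : forall k, A k k = 1.

Lemma cocycle_mulC i j : A i j * A j i = 1.
Proof. by rewrite -cocycle diag1. Qed.

Lemma cocycle_neq0 i j : A i j != 0.
Proof. by apply: contra_eq_neq (cocycle_mulC i j) => ->; rewrite mul0r eq_sym oner_neq0. Qed.

Lemma cocycle_inv i j : (A i j)^-1 = A j i.
Proof. by apply: (mulfI (cocycle_neq0 i j)); rewrite cocycle_mulC divff ?cocycle_neq0. Qed.

Lemma cocycle_mul_self : A *m A = n%:R *: A.
Proof.
apply/matrixP => i k; rewrite !mxE.
under eq_bigr do rewrite -cocycle.
by rewrite sumr_const card_ord mulr_natl.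
Qed.

End Cocycle.

Section ComplexMatrices.
Variable R : realType.
Local Notation C := R[i].
Local Notation normc := (@ComplexField.Normc.normc R).
Local Notation vn := (@vnorm R _).

Lemma normc_ge0 (z : C) : 0 <= normc z.
Proof. by case: z => a b; exact: sqrtr_ge0. Qed.

Lemma normc_real (r : R) : normc r%:C%C = `|r|.
Proof. by rewrite /= expr0n /= addr0 sqrtr_sqr. Qed.

Lemma normc_sum (I : Type) (r : seq I) (P : pred I) (F : I -> C) :
  normc (\sum_(i <- r | P i) F i) <= \sum_(i <- r | P i) normc (F i).
Proof.
apply: (big_ind2 (fun x y => normc x <= y)) => //.
  by rewrite ComplexField.Normc.normc0.
by move=> x1 y1 x2 y2 le1 le2; apply: le_trans (le_normcD _ _) (lerD le1 le2).
Qed.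

Lemma normc_sqr (z : C) : (normc z ^+ 2)%:C%C = z * Num.conj z.
Proof. by rewrite (rmorphXn (real_complex R)) /= -sqr_normc. Qed.

Lemma normc_eq1 (z : C) : z * Num.conj z = 1 -> normc z = 1.
Proof.
move=> zz1; apply/eqP; rewrite -sqrp_eq1 ?normc_ge0 //; apply/eqP.
by apply: complexI; rewrite normc_sqr zz1.
Qed.

Lemma vnorm_ge0 n (x : 'cV[C]_n) : 0 <= vn x.
Proof. exact: sqrtr_ge0. Qed.

Lemma sqr_vnorm n (x : 'cV[C]_n) : vn x ^+ 2 = \sum_i normc (x i 0) ^+ 2.
Proof. by rewrite sqr_sqrtr // sumr_ge0 // => i _; exact: sqr_ge0. Qed.

Lemma sqr_vnorm_dot n (x : 'cV[C]_n) : (vn x ^+ 2)%:C%C = ((x ^t* )%sesqui *m x) 0 0.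
Proof.
rewrite sqr_vnorm rmorph_sum !mxE; apply: eq_bigr => i _.
by rewrite !mxE mulrC -normc_sqr.
Qed.

Lemma normc_le_vnorm n (x : 'cV[C]_n) j : normc (x j 0) <= vn x.
Proof.
rewrite -(ger0_norm (normc_ge0 _)) -sqrtr_sqr ler_wsqrtr // (bigD1 j) //= lerDl.
by apply: sumr_ge0 => i _; exact: sqr_ge0.
Qed.

Lemma vnormZ n (c : C) (x : 'cV[C]_n) : vn (c *: x) = normc c * vn x.
Proof.
rewrite /vnorm; under eq_bigr do rewrite mxE ComplexField.Normc.normcM exprMn.
by rewrite -mulr_sumr sqrtrM ?sqr_ge0 // sqrtr_sqr ger0_norm ?normc_ge0.
Qed.

Lemma vnorm_gt0 n (x : 'cV[C]_n) : x != 0 -> 0 < vn x.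
Proof.
apply: contraNT; rewrite -leNgt => vx_le0; apply/eqP/matrixP => i j.
have : vn x ^+ 2 = 0 by apply/eqP; rewrite sqrf_eq0 eq_le vx_le0 vnorm_ge0.
rewrite sqr_vnorm (ord1 j) mxE => /psumr_eq0P sum0.
have /eqP := sum0 (fun i _ => sqr_ge0 _) i isT; rewrite sqrf_eq0 => /eqP.
exact: ComplexField.Normc.eq0_normc.
Qed.

Lemma vnorm_unitary n (U : 'M[C]_n) (x : 'cV[C]_n) :
  U \is unitarymx -> vn (U *m x) = vn x.
Proof.
rewrite -trmxC_unitary => /unitarymxP; rewrite trmxCK => UtU.
apply/eqP; rewrite -(eqrXn2 (n := 2)) ?vnorm_ge0 //; apply/eqP/complexI.
by rewrite !sqr_vnorm_dot trmx_mul map_mxM -!mulmxA (mulmxA _ U) UtU mul1mx.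
Qed.

Local Open Scope classical_set_scope.

Lemma has_ubound_opnorm n (M : 'M[C]_n) :
  has_ubound [set vn (M *m x) | x in [set x : 'cV[C]_n | vn x = 1]].
Proof.
exists (Num.sqrt (\sum_i (\sum_j normc (M i j)) ^+ 2)) => _ [x x1 <-].
apply: ler_wsqrtr; apply: ler_sum => i _.
have sum_ge0 : 0 <= \sum_j normc (M i j) by apply: sumr_ge0 => j _; exact: normc_ge0.
rewrite lerXn2r ?nnegrE ?normc_ge0 // mxE. apply: le_trans (normc_sum _ _ _) _; apply: ler_sum => j _.
rewrite ComplexField.Normc.normcM ler_piMr ?normc_ge0 //.
by rewrite -x1 normc_le_vnorm.
Qed.

Lemma vnorm_le_opnorm n (M : 'M[C]_n) (x : 'cV[C]_n) :
  vn x = 1 -> vn (M *m x) <= opnorm M.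
Proof. by move=> x1; apply: (ub_le_sup (has_ubound_opnorm M)); exists x. Qed.

Lemma opnorm_le n (M : 'M[C]_n.+1) (c : R) :
  (forall x, vn x = 1 -> vn (M *m x) <= c) -> opnorm M <= c.
Proof.
move=> Mc; apply: ge_sup => [|_ [x x1 <-]]; last exact: Mc.
exists (vn (M *m delta_mx 0 0)), (delta_mx 0 0) => //=.
rewrite /vnorm (bigD1 0) //= big1 => [|i /negbTE i_neq0]; rewrite !mxE ?i_neq0 //=.
  by rewrite expr1n expr0n /= !addr0 sqrtr1 expr1n sqrtr1.
by rewrite expr0n /= addr0 sqrtr0 expr0n.
Qed.

Lemma eigenvalue_le_opnorm n (M : 'M[C]_n) (v : 'cV[C]_n) (lam : C) :
  v != 0 -> M *m v = lam *: v -> normc lam <= opnorm M.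
Proof.
move=> /vnorm_gt0 v_gt0 Mv; set u := ((vn v)^-1)%:C%C *: v.
have nu : normc ((vn v)^-1)%:C%C = (vn v)^-1 by rewrite normc_real gtr0_norm ?invr_gt0.
have u1 : vn u = 1 by rewrite vnormZ nu mulVf ?gt_eqF.
have <- : vn (M *m u) = normc lam.
  by rewrite -scalemxAr Mv scalerA mulrC -scalerA vnormZ -/u u1 mulr1.
exact: vnorm_le_opnorm.
Qed.

(* ||Mx||^2 <= n (sum_j |x_j|)^2 <= n^2 ||x||^2 by Cauchy-Schwarz. *)
Lemma opnorm_le_dim n (M : 'M[C]_n.+1) :
  (forall i j, normc (M i j) <= 1) -> opnorm M <= n.+1%:R.
Proof.
move=> M1; apply: opnorm_le => x x1.
rewrite -(ger0_norm (ler0n _ n.+1)) -sqrtr_sqr ler_wsqrtr //.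
pose T := \sum_j normc (x j 0).
have MxT i : normc ((M *m x) i 0) <= T.
  rewrite mxE; apply: le_trans (normc_sum _ _ _) _; apply: ler_sum => j _.
  by rewrite ComplexField.Normc.normcM ler_piMl ?normc_ge0.
have T2 : T ^+ 2 <= n.+1%:R.
  by have := sqr_sum_le (fun j => normc (x j 0)); rewrite -sqr_vnorm x1 expr1n mulr1.
have T_ge0 : 0 <= T by apply: sumr_ge0 => j _; exact: normc_ge0.
apply: le_trans (_ : \sum_(i < n.+1) T ^+ 2 <= _).
  by apply: ler_sum => i _; rewrite lerXn2r ?nnegrE ?normc_ge0 ?MxT.
rewrite sumr_const card_ord -[_ *+ n.+1]mulr_natl [X in _ <= X]expr2.
by apply: ler_wpM2l.
Qed.

Lemma numrange_unitary_conj n (U B : 'M[C]_n) :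
  U \is unitarymx -> numrange (U *m B *m (U ^t* )%sesqui) = numrange B.
Proof.
move=> U_unitary; have Ut_unitary : (U ^t* )%sesqui \is unitarymx by rewrite trmxC_unitary.
have UtUK y : (U ^t* )%sesqui *m (U *m y) = y.
  by have /unitarymxP := Ut_unitary; rewrite trmxCK mulmxA => ->; rewrite mul1mx.
have quadE x : ((x ^t* )%sesqui *m (U *m B *m (U ^t* )%sesqui) *m x) =
    (((U ^t* )%sesqui *m x) ^t* )%sesqui *m B *m ((U ^t* )%sesqui *m x).
  by rewrite trmx_mul map_mxM trmxCK !mulmxA.
apply/seteqP; split => _ [x x1 <-].
  by exists ((U ^t* )%sesqui *m x); rewrite /= ?vnorm_unitary ?quadE.
exists (U *m x); first by rewrite /= vnorm_unitary.
by rewrite quadE UtUK.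
Qed.

Section ComplexCocycle.
Variables (n : nat) (A : 'M[C]_n.+1).
Hypothesis cocycle : forall i j k, A i k = A i j * A j k.
Hypothesis diag1 : forall k, A k k = 1.

Lemma cocycle_adjmx : adjmx A = econj (ereciprocal A).
Proof. by apply/matrixP => i j; rewrite !mxE cocycle_inv. Qed.

Lemma cocycle_opnorm_ge : n.+1%:R <= opnorm A.
Proof.
have col_neq0 : col 0 A != 0 by apply/matrix0Pn; exists 0, 0; rewrite mxE diag1 oner_neq0.
have col_eigen : A *m col 0 A = (n.+1%:R : R)%:C%C *: col 0 A.
  by rewrite rmorph_nat !colE mulmxA cocycle_mul_self // scalemxAl.
by have := eigenvalue_le_opnorm col_neq0 col_eigen; rewrite normc_real ger0_norm.
Qed.

Hypothesis A_herm : adjmx A = A.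

Lemma cocycle_herm_conj i j : Num.conj (A i j) = A j i.
Proof. by rewrite -[in RHS]A_herm !mxE. Qed.

Lemma cocycle_herm_normc i j : normc (A i j) = 1.
Proof. by apply: normc_eq1; rewrite cocycle_herm_conj cocycle_mulC. Qed.

Let d : 'rV[C]_n.+1 := \row_i A i 0.

Lemma adj_diag_cocycle : ((diag_mx d) ^t* )%sesqui = diag_mx (\row_i A 0 i).
Proof.
rewrite -map_trmx map_diag_mx tr_diag_mx; congr diag_mx.
by apply/rowP => i; rewrite !mxE; exact: cocycle_herm_conj.
Qed.

Lemma unitary_diag_cocycle : diag_mx d \is unitarymx.
Proof.
apply/unitarymxP; rewrite adj_diag_cocycle mulmx_diag -diag_const_mx; congr diag_mx.
by apply/rowP => i; rewrite !mxE -cocycle diag1.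
Qed.

Lemma hadamard_cocycle_herm B : hadamard A B = diag_mx d *m B *m (diag_mx d ^t* )%sesqui.
Proof.
apply/matrixP => i j; rewrite adj_diag_cocycle mul_mx_diag mul_diag_mx !mxE.
by rewrite (cocycle i 0 j) mulrAC.
Qed.

End ComplexCocycle.

End ComplexMatrices.

Theorem corollary2p3 (R : realType) (n : nat) (A : 'M[R[i]]_n) :
  (exists B : 'M[R[i]]_n, hadamard A B != 0) ->
  (forall B C : 'M[R[i]]_n, hadamard A (B *m C) = hadamard A B *m hadamard A C) ->
  [/\ (* (i) *)
      ((forall i j, A i j != 0) /\
       adjmx A = econj (ereciprocal A) /\
       diagonalizable A),
      (* (ii) *)
      (n%:R <= opnorm A /\ (adjmx A = A -> opnorm A = n%:R))
    & (* (iii) *)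
      (adjmx A = A -> forall B : 'M[R[i]]_n,
          numrange (hadamard A B) = numrange B)].
Proof.
move=> [B AB_neq0] hadamardM.
case: n => [|n] in A B AB_neq0 hadamardM *; first by rewrite flatmx0 eqxx in AB_neq0.
have cocycle := hadamard_mul_cocycle hadamardM.
have /matrix0Pn[i [j Aij_neq0]] : A != 0.
  by apply: contraNneq AB_neq0 => ->; apply/eqP/matrixP => i j; rewrite !mxE mul0r.
have diag1 k : A k k = 1 := cocycle_diag cocycle k Aij_neq0.
split.
- split; first exact: cocycle_neq0.
  split; first exact: cocycle_adjmx.
  apply: (diagonalizable_sqr_scale (c := n.+1%:R)); first by rewrite pnatr_eq0.
  exact: cocycle_mul_self.
- split; first exact: cocycle_opnorm_ge.
  move=> A_herm; apply: le_anti; rewrite cocycle_opnorm_ge // andbT.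
  by apply: opnorm_le_dim => a b; rewrite cocycle_herm_normc.
- move=> A_herm B'; rewrite hadamard_cocycle_herm //.
  exact/numrange_unitary_conj/unitary_diag_cocycle.
Qed.
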